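(* Let $X$ be a metric directed multigraph whose strongly connected components all have different total lengths, and let $(X_n,n\in\mathbb{N})$ be metric directed multigraphs with $d_{\vec{\mathcal G}}(X_n,X)\to0$. Then the strongly connected components of $X_n$, listed in decreasing order of total length and viewed as metric directed multigraphs, converge (componentwise, for $d_{\vec{\mathcal G}}$) to those of $X$, listed in decreasing order of total length.
   Context: A metric directed multigraph (MDM) is $(V,E,r,\ell)$ with $V,E$ finite sets, $r=(r_1,r_2):E\to V\times V$ (tail, head), and $\ell:E\to(0,\infty)$; its total length is $\sum_e\ell(e)$. Strongly connected components are maximal sub-multigraphs in which any vertex can reach any other by a directed path; they are viewed as MDMs with the inherited edge lengths. $d_{\vec{\mathcal G}}(X,X')=\inf\sup_{e\in E}|\ell(e)-\ell'(g(e))|$, infimum over graph isomorphisms $(f,g)$ (bijections $f:V\to V'$, $g:E\to E'$ with $r'(g(e))=(f(r_1(e)),f(r_2(e)))$), and $+\infty$ if none exists. *)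

From HB Require Import structures.
From mathcomp Require Import all_boot all_order all_algebra.
From mathcomp Require Import all_classical all_reals.
From mathcomp Require Import all_analysis.
Set Implicit Arguments. Unset Strict Implicit. Unset Printing Implicit Defensive.
Import Order.TTheory GRing.Theory Num.Theory.
Local Open Scope ring_scope.

(* A metric directed multigraph (V, E, r = (tail, head), l) with V, E finite
   and positive edge lengths. *)
Record mdm (R : realType) := MDM {
  mV : finType;
  mE : finType;
  mtail : mE -> mV;
  mhead : mE -> mV;
  mlen : mE -> R;
  mlen_pos : forall e, 0 < mlen e }.
Arguments mV {R} m.
Arguments mE {R} m.
Arguments mtail {R} m e.
Arguments mhead {R} m e.
Arguments mlen {R} m e.
Arguments mlen_pos {R} m e.

Section MDM.
Variable R : realType.
Implicit Types X Y : mdm R.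

Definition total_length X : R := \sum_(e : mE X) mlen X e.

Definition graph_iso X Y (f : mV X -> mV Y) (g : mE X -> mE Y) : Prop :=
  bijective f /\ bijective g /\
  forall e, mtail Y (g e) = f (mtail X e) /\ mhead Y (g e) = f (mhead X e).

(* sup_e |l(e) - l'(g e)| (taken to be 0 when E is empty) *)
Definition iso_dist X Y (g : mE X -> mE Y) : R :=
  \big[Num.max/0]_(e : mE X) `|mlen X e - mlen Y (g e)|.

(* d_G(X,Y) = inf over isomorphisms, +oo if none *)
Definition dG X Y : \bar R :=
  ereal_inf [set x : \bar R | exists (f : mV X -> mV Y) (g : mE X -> mE Y),
                 graph_iso f g /\ x = (iso_dist g)%:E].

Definition is_subgraph X (Vs : {set mV X}) (Es : {set mE X}) : Prop :=
  forall e, e \in Es -> mtail X e \in Vs /\ mhead X e \in Vs.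

Definition erel X (Es : {set mE X}) : rel (mV X) :=
  [rel u v | [exists e in Es, (mtail X e == u) && (mhead X e == v)]].

Definition strongly_connected X (Vs : {set mV X}) (Es : {set mE X}) : Prop :=
  Vs != finset.set0 /\ forall u v, u \in Vs -> v \in Vs -> connect (erel Es) u v.

Definition is_scc X (Vs : {set mV X}) (Es : {set mE X}) : Prop :=
  [/\ is_subgraph Vs Es, strongly_connected Vs Es &
   forall (Vs' : {set mV X}) (Es' : {set mE X}), Vs \subset Vs' -> Es \subset Es' ->
     is_subgraph Vs' Es' -> strongly_connected Vs' Es' -> Vs' = Vs /\ Es' = Es].

(* the sub-multigraph (Vs, Es) viewed as an MDM with inherited lengths
   (edges of Es with an endpoint outside Vs are dropped; for a genuine
   subgraph there are none) *)
Section Sub.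
Variables (X : mdm R) (Vs : {set mV X}) (Es : {set mE X}).
Definition subV := {v : mV X | v \in Vs}.
Definition subE :=
  {e : mE X | [&& e \in Es, mtail X e \in Vs & mhead X e \in Vs]}.
Lemma subE_tail (e : subE) : mtail X (val e) \in Vs.
Proof. by case/and3P: (valP e). Qed.
Lemma subE_head (e : subE) : mhead X (val e) \in Vs.
Proof. by case/and3P: (valP e). Qed.
Definition sub_mdm : mdm R :=
  @MDM R subV subE (fun e => exist _ (mtail X (val e)) (subE_tail e))
       (fun e => exist _ (mhead X (val e)) (subE_head e))
       (fun e => mlen X (val e)) (fun e => mlen_pos X (val e)).
End Sub.

Definition comp_length X (p : {set mV X} * {set mE X}) : R :=
  total_length (sub_mdm p.1 p.2).

Definition scc_list X (s : seq ({set mV X} * {set mE X})) : Prop :=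
  [/\ uniq s, (forall p, p \in s <-> is_scc p.1 p.2) &
      sorted (fun p q => comp_length q <= comp_length p) s].

Definition scc_mdms X (s : seq ({set mV X} * {set mE X})) : seq (mdm R) :=
  map (fun p => sub_mdm p.1 p.2) s.

(* empty MDM, used as default value for nth *)
Definition empty_mdm : mdm R :=
  @MDM R void void (fun e => match e with end) (fun e => match e with end)
       (fun e => match e with end) (fun e => match e with end).

End MDM.

From HB Require Import structures.
From mathcomp Require Import all_boot all_order all_algebra.
From mathcomp Require Import all_classical all_reals.
From mathcomp Require Import all_analysis.
From mathcomp Require Import lra.
Import Order.TTheory GRing.Theory Num.Theory.
Set Implicit Arguments. Unset Strict Implicit.
Local Open Scope classical_set_scope.
Local Open Scope ring_scope.

(* An isomorphism (f, g) from Y to X maps strongly connected components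
   bijectively onto strongly connected components and moves the total length
   of each by at most #|E| times the maximal edge-length distortion of g.
   Once this is less than half the least gap between component lengths of X,
   f and g carry the length-sorted components of Y onto those of X, in order,
   and their restriction to each component shows that matched components are
   at distance at most that distortion, hence at most d(Y, X). *)

Lemma imsetK (T T' : finType) (f : T -> T') (f' : T' -> T) :
  cancel f f' -> cancel (fun A : {set T} => f @: A) (fun B => f' @: B).
Proof. by move=> fK A; rewrite -imset_comp (eq_imset _ fK) imset_id. Qed.

Section GraphHom.
Variables (R : realType) (Y X : mdm R) (f : mV Y -> mV X) (g : mE Y -> mE X).

Definition graph_hom : Prop :=
  forall e, mtail X (g e) = f (mtail Y e) /\ mhead X (g e) = f (mhead Y e).

Hypothesis fg_hom : graph_hom.

Lemma erel_imset (Es : {set mE Y}) u v :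
  erel Es u v -> erel (g @: Es) (f u) (f v).
Proof.
case/existsP=> e /and3P[eEs /eqP tl /eqP hd]; apply/existsP; exists (g e).
by case: (fg_hom e) => -> ->; rewrite imset_f // tl hd !eqxx.
Qed.

Lemma connect_imset (Es : {set mE Y}) u v :
  connect (erel Es) u v -> connect (erel (g @: Es)) (f u) (f v).
Proof.
case/connectP=> p p_path ->; apply/connectP; exists (map f p).
  exact: homo_path (@erel_imset Es) p_path.
by rewrite last_map.
Qed.

Lemma is_subgraph_imset (Vs : {set mV Y}) (Es : {set mE Y}) :
  is_subgraph Vs Es -> is_subgraph (f @: Vs) (g @: Es).
Proof.
move=> sub _ /imsetP[e eEs ->]; case: (fg_hom e) => -> ->.
by case: (sub e eEs) => tl hd; rewrite !imset_f.
Qed.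

Lemma strongly_connected_imset (Vs : {set mV Y}) (Es : {set mE Y}) :
  strongly_connected Vs Es -> strongly_connected (f @: Vs) (g @: Es).
Proof.
case=> Vs_n0 conn; split; first by rewrite imset_eq0.
by move=> _ _ /imsetP[u uVs ->] /imsetP[v vVs ->]; apply/connect_imset/conn.
Qed.

End GraphHom.

Lemma iso_dist_ge0 (R : realType) (Y X : mdm R) (g : mE Y -> mE X) :
  0 <= iso_dist g.
Proof. exact: bigmax_ge_id. Qed.

Lemma iso_dist_le (R : realType) (Y X : mdm R) (g : mE Y -> mE X) e :
  `|mlen Y e - mlen X (g e)| <= iso_dist g.
Proof. exact: (le_bigmax _ (fun e => `|mlen Y e - mlen X (g e)|)). Qed.

Lemma comp_lengthE (R : realType) (Z : mdm R) (p : {set mV Z} * {set mE Z}) :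
  comp_length p =
  \sum_(e | [&& e \in p.2, mtail Z e \in p.1 & mhead Z e \in p.1]) mlen Z e.
Proof.
by rewrite /comp_length /total_length /=
  (big_sub [pred e | [&& e \in p.2, mtail Z e \in p.1 & mhead Z e \in p.1]]).
Qed.

Section GraphIso.
Variables (R : realType) (Y X : mdm R) (f : mV Y -> mV X) (g : mE Y -> mE X)
  (f' : mV X -> mV Y) (g' : mE X -> mE Y).
Hypotheses (fK : cancel f f') (f'K : cancel f' f)
  (gK : cancel g g') (g'K : cancel g' g) (fg_hom : graph_hom f g).

Lemma graph_hom_inv : graph_hom f' g'.
Proof. by move=> e; case: (fg_hom (g' e)); rewrite g'K => -> ->; rewrite !fK. Qed.

Definition iso_image (p : {set mV Y} * {set mE Y}) := (f @: p.1, g @: p.2).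

Lemma is_scc_iso_image p : is_scc p.1 p.2 -> is_scc (iso_image p).1 (iso_image p).2.
Proof.
case: p => Vs Es [/= sub sc maxl].
split; [exact: is_subgraph_imset | exact: strongly_connected_imset |].
move=> Vs' Es' sVs sEs sub' sc'.
have [<- <-] : f' @: Vs' = Vs /\ g' @: Es' = Es.
  apply: maxl; first by rewrite -(imsetK fK Vs) imsetS.
  - by rewrite -(imsetK gK Es) imsetS.
  - exact: is_subgraph_imset graph_hom_inv _ _ sub'.
  - exact: strongly_connected_imset graph_hom_inv _ _ sc'.
by rewrite !imsetK.
Qed.

Lemma comp_length_iso_image p :
  `|comp_length (iso_image p) - comp_length p| <= #|mE Y|%:R * iso_dist g.
Proof.
rewrite !comp_lengthE (reindex g) /=; last exact: onW_bij _ (Bijective gK g'K).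
have [inj_f inj_g] := (can_inj fK, can_inj gK).
rewrite (eq_bigl (fun e => [&& e \in p.2, mtail Y e \in p.1 & mhead Y e \in p.1]))
  => [|e]; last by rewrite /= (fg_hom e).1 (fg_hom e).2 !mem_imset.
rewrite -sumrB (le_trans (ler_norm_sum _ _ _)) // big_mkcond /=.
have -> : #|mE Y|%:R * iso_dist g = \sum_(e : mE Y) iso_dist g.
  by rewrite sumr_const mulr_natl.
apply: ler_sum => e _; case: ifP => _; last exact: iso_dist_ge0.
by rewrite distrC iso_dist_le.
Qed.

Lemma dG_sub_iso_image (Vs : {set mV Y}) (Es : {set mE Y}) :
  (dG (sub_mdm Vs Es) (sub_mdm (f @: Vs) (g @: Es)) <= (iso_dist g)%:E)%E.
Proof.
have memV x : x \in f @: Vs -> f' x \in Vs by case/imsetP=> y yVs ->; rewrite fK.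
have memE e : e \in g @: Es -> g' e \in Es by case/imsetP=> d dEs ->; rewrite gK.
have gs_mem (e : subE Vs Es) : [&& g (val e) \in g @: Es,
    mtail X (g (val e)) \in f @: Vs & mhead X (g (val e)) \in f @: Vs].
  by case/and3P: (valP e) => *; rewrite (fg_hom _).1 (fg_hom _).2 !imset_f.
have gs'_mem (e : subE (f @: Vs) (g @: Es)) : [&& g' (val e) \in Es,
    mtail Y (g' (val e)) \in Vs & mhead Y (g' (val e)) \in Vs].
  case/and3P: (valP e) => *.
  by rewrite (graph_hom_inv _).1 (graph_hom_inv _).2 !memV ?memE.
pose fs (v : subV Vs) : subV (f @: Vs) := exist _ (f (val v)) (imset_f f (valP v)).
pose fs' (v : subV (f @: Vs)) : subV Vs := exist _ (f' (val v)) (memV _ (valP v)).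
pose gs (e : subE Vs Es) : subE (f @: Vs) (g @: Es) := exist _ (g (val e)) (gs_mem e).
pose gs' (e : subE (f @: Vs) (g @: Es)) : subE Vs Es := exist _ (g' (val e)) (gs'_mem e).
apply: (@le_trans _ _ (@iso_dist _ (sub_mdm Vs Es) (sub_mdm (f @: Vs) (g @: Es)) gs)%:E).
  apply: ereal_inf_lbound; exists fs, gs; split=> //; split.
    by exists fs' => v; apply: val_inj; rewrite /= ?fK ?f'K.
  split; first by exists gs' => e; apply: val_inj; rewrite /= ?gK ?g'K.
  by move=> e; split; apply: val_inj; rewrite /= ?(fg_hom _).1 ?(fg_hom _).2.
rewrite lee_fin; apply: bigmax_le => [|e _]; first exact: iso_dist_ge0.
exact: (iso_dist_le g (val e)).
Qed.

End GraphIso.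

Definition scc_separated (R : realType) (X : mdm R) (delta : R) : Prop :=
  forall p q : {set mV X} * {set mE X}, is_scc p.1 p.2 -> is_scc q.1 q.2 ->
    p <> q -> delta <= `|comp_length p - comp_length q|.

Lemma scc_separated_exists (R : realType) (X : mdm R) (s : seq ({set mV X} * {set mE X})) :
  scc_list s ->
  (forall p q : {set mV X} * {set mE X}, is_scc p.1 p.2 -> is_scc q.1 q.2 ->
     p <> q -> comp_length p <> comp_length q) ->
  exists2 delta : R, 0 < delta & scc_separated X delta.
Proof.
case=> _ s_scc _ distinct.
pose P pq := [&& pq.1 \in s, pq.2 \in s & pq.1 != pq.2].
exists (\big[Num.min/1]_(pq | P pq) `|comp_length pq.1 - comp_length pq.2|).
  apply: lt_bigmin => // pq /and3P[p_s q_s /eqP neq].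
  by rewrite normr_gt0 subr_eq0; apply/eqP/distinct; rewrite -?s_scc.
move=> p q p_scc q_scc /eqP neq; apply: (bigmin_le_cond _ (j := (p, q))).
by rewrite /P /= !(s_scc _).2.
Qed.

Section Matching.
Variables (R : realType) (Y X : mdm R) (f : mV Y -> mV X) (g : mE Y -> mE X)
  (f' : mV X -> mV Y) (g' : mE X -> mE Y).
Hypotheses (fK : cancel f f') (f'K : cancel f' f)
  (gK : cancel g g') (g'K : cancel g' g) (fg_hom : graph_hom f g).
Variable delta : R.
Hypotheses (sepX : scc_separated X delta)
  (close : 2 * (#|mE Y|%:R * iso_dist g) < delta).

Let longer (Z : mdm R) (p q : {set mV Z} * {set mE Z}) :=
  comp_length q <= comp_length p.

Lemma sorted_map_iso_image t :
  scc_list t -> sorted (@longer X) (map (iso_image f g) t).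
Proof.
case=> _ t_scc t_sorted; rewrite sorted_map.
apply: sub_in_sorted (allss t) t_sorted => a b a_t b_t /= ab; rewrite /longer.
case: (eqVneq (iso_image f g a) (iso_image f g b)) => [-> //|/eqP neq].
have image_scc p : p \in t -> is_scc (iso_image f g p).1 (iso_image f g p).2.
  by move=> /(t_scc p).1; apply: is_scc_iso_image.
have := sepX (image_scc a a_t) (image_scc b b_t) neq.
have := comp_length_iso_image fK gK g'K fg_hom a.
have := comp_length_iso_image fK gK g'K fg_hom b.
move: close ab; set K := _ * iso_dist g.
by rewrite ler_normr !ler_norml => ? ? /andP[? ?] /andP[? ?] /orP[] ?; lra.
Qed.

Lemma map_iso_image s t : scc_list s -> scc_list t -> map (iso_image f g) t = s.
Proof.
case=> s_uniq s_scc s_sorted t_list; have [t_uniq t_scc _] := t_list.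
have mem_image : map (iso_image f g) t =i s.
  move=> p; apply/mapP/idP => [[a a_t ->]|p_s].
    exact/(s_scc _).2/(is_scc_iso_image fK f'K gK g'K fg_hom)/(t_scc _).1.
  exists (f' @: p.1, g' @: p.2); last by rewrite /iso_image /= !imsetK; case: p {p_s}.
  apply/(t_scc _).2/(is_scc_iso_image f'K fK g'K gK (graph_hom_inv fK g'K fg_hom)).
  exact/(s_scc _).1.
have uniq_image : uniq (map (iso_image f g) t).
  rewrite map_inj_uniq // => -[a b] [c d] [].
  by move=> /(imset_inj (can_inj fK)) -> /(imset_inj (can_inj gK)) ->.
have delta_gt0 : 0 < delta.
  by apply: le_lt_trans close; rewrite !mulr_ge0 ?iso_dist_ge0.
apply: (sorted_eq_in (leT := @longer X)) (sorted_map_iso_image t_list) s_sorted _.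
- by move=> y x z _ _ _ xy yz; apply: le_trans yz xy.
- move=> p q; rewrite !mem_image => p_s q_s pq_same.
  case: (eqVneq p q) => [//|/eqP neq].
  have := sepX ((s_scc p).1 p_s) ((s_scc q).1 q_s) neq.
  by rewrite (le_anti pq_same) subrr normr0 leNgt delta_gt0.
exact: uniq_perm.
Qed.

End Matching.

Lemma scc_lists_iso (R : realType) (Y X : mdm R) (f : mV Y -> mV X) (g : mE Y -> mE X)
    (delta : R) (s : seq ({set mV X} * {set mE X})) (t : seq ({set mV Y} * {set mE Y})) :
  scc_separated X delta -> scc_list s -> scc_list t -> graph_iso f g ->
  2 * (#|mE X|%:R * iso_dist g) < delta ->
  size t = size s /\ forall i, (i < size s)%N ->
    (dG (nth (empty_mdm R) (scc_mdms t) i) (nth (empty_mdm R) (scc_mdms s) i)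
      <= (iso_dist g)%:E)%E.
Proof.
move=> sepX s_list t_list [[f' fK f'K] [[g' gK g'K] fg_hom]] close.
rewrite -(bij_eq_card (Bijective gK g'K)) in close.
rewrite -(map_iso_image fK f'K gK g'K fg_hom sepX close s_list t_list) size_map.
split=> // i i_lt; rewrite /scc_mdms -map_comp.
rewrite !(nth_map ((finset.set0, finset.set0) : {set mV Y} * {set mE Y})) //.
exact: dG_sub_iso_image.
Qed.

Lemma dG_ge0 (R : realType) (Y X : mdm R) : (0 <= dG Y X)%E.
Proof. by apply/ereal_infP => _ [f [g [_ ->]]]; rewrite lee_fin iso_dist_ge0. Qed.

Lemma scc_lists_dG (R : realType) (Y X : mdm R) (delta : R)
    (s : seq ({set mV X} * {set mE X})) (t : seq ({set mV Y} * {set mE Y})) :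
  0 < delta -> scc_separated X delta -> scc_list s -> scc_list t ->
  (dG Y X < (delta / (2 * (#|mE X|%:R + 1)))%:E)%E ->
  size t = size s /\ forall i, (i < size s)%N ->
    (dG (nth (empty_mdm R) (scc_mdms t) i) (nth (empty_mdm R) (scc_mdms s) i)
      <= dG Y X)%E.
Proof.
move=> delta_gt0 sepX s_list t_list; set eps := delta / _ => /ereal_inf_lt.
have close (g : mE Y -> mE X) :
    iso_dist g < eps -> 2 * (#|mE X|%:R * iso_dist g) < delta.
  have := iso_dist_ge0 g; have : (0 <= #|mE X|%:R :> R) by [].
  by rewrite /eps ltr_pdivlMr ?mulr_gt0 ?ltr_wpDl //; nra.
case=> _ [f0 [g0 [iso0 ->]]]; rewrite lte_fin => g0_lt.
have [size_eq dG_le0] := scc_lists_iso sepX s_list t_list iso0 (close _ g0_lt).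
split=> // i i_lt; apply/ereal_infP => _ [f [g [iso ->]]].
have [/close close_g|ge_eps] := ltP (iso_dist g) eps.
  exact: (scc_lists_iso sepX s_list t_list iso close_g).2.
apply: le_trans (dG_le0 i i_lt) _.
by rewrite lee_fin ltW // (lt_le_trans g0_lt).
Qed.

Lemma cvge0_lt (R : realType) (T : Type) (F : set_system T) {FF : Filter F}
    (u : T -> \bar R) (eps : R) :
  u @ F --> 0%E -> 0 < eps -> \forall x \near F, (u x < eps%:E)%E.
Proof.
move=> u0 eps_gt0; apply: (u0 [set y | y < eps%:E]%E).
apply/(nbhs_EFin (fun y => y < eps%:E)%E 0).
by apply: filterS (lt_nbhsl eps_gt0) => x; rewrite /= lte_fin.
Qed.

Theorem proposition5p3 (R : realType) (X : mdm R) (Xn : nat -> mdm R) :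
  (forall p q : {set mV X} * {set mE X},
      is_scc p.1 p.2 -> is_scc q.1 q.2 -> p <> q ->
      comp_length p <> comp_length q) ->
  (fun n => dG (Xn n) X) @ \oo --> 0%E ->
  forall (s : seq ({set mV X} * {set mE X}))
         (sn : forall n, seq ({set mV (Xn n)} * {set mE (Xn n)})),
    scc_list s -> (forall n, scc_list (sn n)) ->
    (\forall n \near \oo, size (sn n) = size s) /\
    (forall i, (i < size s)%N ->
       (fun n => dG (nth (empty_mdm R) (scc_mdms (sn n)) i)
                    (nth (empty_mdm R) (scc_mdms s) i)) @ \oo --> 0%E).
Proof.
move=> distinct dG_cvg s sn s_list sn_list.
have [delta delta_gt0 sepX] := scc_separated_exists s_list distinct.
have eps_gt0 : 0 < delta / (2 * (#|mE X|%:R + 1)).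
  by rewrite divr_gt0 ?mulr_gt0 ?ltr_wpDl.
have near_X : \forall n \near \oo,
    (dG (Xn n) X < (delta / (2 * (#|mE X|%:R + 1)))%:E)%E.
  exact: cvge0_lt.
have matched n := scc_lists_dG delta_gt0 sepX s_list (sn_list n).
split; first by apply: filterS near_X => n /matched[].
move=> i i_lt; apply: (@squeeze_cvge _ _ _ _ (cst 0%E) _ (fun n => dG (Xn n) X)) dG_cvg.
- by apply: filterS near_X => n /matched[_ /(_ i i_lt) ->]; rewrite dG_ge0.
- exact: cvg_cst.
Qed.
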